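(* In the cell FDE setting described in the context, assume (H1), (H2), (H3), and: (H8) there exist $\delta>0$ and $z^*\ge0$ with $q(z)\le-\delta$ for all $z\ge z^*$; (H9) for every $K>0$ there is $L=L(K)$ such that $j(\varphi,\psi)\ge K$ whenever $(\varphi,\psi)\in U_+$ and $\min_{[-h,0]}\varphi\ge L$. Then there exists $K_2$ such that for every $\phi\in X_+$ there is $t_m=t_m(\phi)$ with $w^\phi(t)\le K_2$ for all $t\ge t_m$.
   Context: Let $h>0$, $R_-<0$, $I:=(R_-,\infty)$. $\|\phi\|_0:=\max_{\theta\in[-h,0]}|\phi(\theta)|$, $\|\phi\|_1:=\|\phi\|_0+\|\phi'\|_0$; $x_t(s):=x(t+s)$, $s\in[-h,0]$. Let $U:=C^1([-h,0],\mathbb R)\times C^1([-h,0],I)$, $U_+:=C^1([-h,0],[0,\infty)^2)$, $q:I\to\mathbb R$, $j:U\to\mathbb R$, $\mu\ge0$. Cell FDE: $w'(t)=q(v(t))w(t)$, $v'(t)=j(w_t,v_t)-\mu v(t)$, $t>0$, $(w_0,v_0)=(\varphi,\psi)$. $F(\varphi,\psi):=(q(\psi(0))\varphi(0),j(\varphi,\psi)-\mu\psi(0))$, $X:=\{\phi\in U:\phi'(0)=F(\phi)\}$, $X_+:=X\cap U_+$. Solutions are $C^1$ maps $x=(w,v)$ on $[-h,t_* )$ with $x_0=\phi$, $x_t\in U$, satisfying the equations on $(0,t_* )$. (S): $f$ is $C^1$, each $Df(\phi)$ extends to a linear map on $C([-h,0],\mathbb R^n)$ and $(\phi,\chi)\mapsto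 D_ef(\phi)\chi$ is continuous. (sLb) on $\mathcal O_+$: for each $\|\cdot\|_1$-bounded $B\subset\mathcal O_+$ there is $L_B$ with $|f(\phi)-f(\chi)|\le L_B\|\phi-\chi\|_0$ on $B$. (H1): $j$ satisfies (S) on $U$, (sLb) on $U_+$, $j\ge0$ on $U_+$, and $j(B_1\times B_2)$ is bounded whenever $B_1\times B_2\subset U_+$ with $B_1$ bounded. (H2): $q$ bounded and $C^1$. (H3): $X_+\neq\emptyset$. Under (H1)-(H3) each $\phi\in X_+$ has a unique solution $(w^\phi,v^\phi)$ on $[-h,\infty)$ with segments in $X_+$. *)

From Stdlib Require Import Reals.
Open Scope R_scope.

(* f has derivative l at x relative to D (one-sided at endpoints of intervals) *)
Definition has_deriv_within (D : R -> Prop) (f : R -> R) (x l : R) : Prop :=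
  forall eps, 0 < eps -> exists del, 0 < del /\
    forall y, D y -> y <> x -> Rabs (y - x) < del ->
      Rabs ((f y - f x) / (y - x) - l) <= eps.

Definition cont_within (D : R -> Prop) (g : R -> R) (x : R) : Prop :=
  forall eps, 0 < eps -> exists del, 0 < del /\
    forall y, D y -> Rabs (y - x) < del -> Rabs (g y - g x) <= eps.

Definition cont_on (D : R -> Prop) (g : R -> R) : Prop :=
  forall x, D x -> cont_within D g x.

Definition deriv_on (D : R -> Prop) (f f' : R -> R) : Prop :=
  forall x, D x -> has_deriv_within D f x (f' x).

Definition C1_on (D : R -> Prop) (f : R -> R) : Prop :=
  exists f', deriv_on D f f' /\ cont_on D f'.

Definition J (h : R) (t : R) : Prop := - h <= t <= 0.

(* ||(f,g)||_0 <= c, using the max-norm on R^2 *)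
Definition bnd0 (h : R) (f g : R -> R) (c : R) : Prop :=
  forall t, J h t -> Rabs (f t) <= c /\ Rabs (g t) <= c.

(* ||(f,g)||_1 <= c  (||.||_1 = ||.||_0 + ||.'||_0) *)
Definition bnd1 (h : R) (f g : R -> R) (c : R) : Prop :=
  exists f' g' a b, deriv_on (J h) f f' /\ deriv_on (J h) g g' /\
    bnd0 h f g a /\ bnd0 h f' g' b /\ a + b <= c.

Definition bnd1s (h : R) (f : R -> R) (c : R) : Prop :=
  bnd1 h f (fun _ => 0) c.

Definition lt1 (h : R) (f g : R -> R) (d : R) : Prop :=
  exists c, c < d /\ bnd1 h f g c.
Definition lt0 (h : R) (f g : R -> R) (d : R) : Prop :=
  exists c, c < d /\ bnd0 h f g c.

Definition fsub (f g : R -> R) : R -> R := fun t => f t - g t.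

Definition InU (h Rm : R) (phi psi : R -> R) : Prop :=
  C1_on (J h) phi /\ C1_on (J h) psi /\ (forall t, J h t -> Rm < psi t).

Definition InUp (h : R) (phi psi : R -> R) : Prop :=
  C1_on (J h) phi /\ C1_on (J h) psi /\
  (forall t, J h t -> 0 <= phi t /\ 0 <= psi t).

Definition InX (h Rm mu : R) (q : R -> R) (j : (R -> R) -> (R -> R) -> R)
  (phi psi : R -> R) : Prop :=
  InU h Rm phi psi /\
  exists phi' psi', deriv_on (J h) phi phi' /\ deriv_on (J h) psi psi' /\
    phi' 0 = q (psi 0) * phi 0 /\ psi' 0 = j phi psi - mu * psi 0.

Definition InXp (h Rm mu : R) (q : R -> R) (j : (R -> R) -> (R -> R) -> R)
  (phi psi : R -> R) : Prop :=
  InX h Rm mu q j phi psi /\ InUp h phi psi.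

(* j is a function on U: it only depends on the restrictions to [-h,0] *)
Definition j_well_defined (h Rm : R) (j : (R -> R) -> (R -> R) -> R) : Prop :=
  forall phi1 psi1 phi2 psi2, InU h Rm phi1 psi1 ->
    (forall t, J h t -> phi1 t = phi2 t /\ psi1 t = psi2 t) ->
    j phi1 psi1 = j phi2 psi2.

Definition cont_J (h : R) (f : R -> R) : Prop := cont_on (J h) f.

Definition prop_S (h Rm : R) (j : (R -> R) -> (R -> R) -> R) : Prop :=
  exists Dj : (R -> R) -> (R -> R) -> (R -> R) -> (R -> R) -> R,
  (forall phi psi, InU h Rm phi psi ->
     forall c1 c2 e1 e2 a, cont_J h c1 -> cont_J h c2 -> cont_J h e1 -> cont_J h e2 ->
       Dj phi psi (fun t => c1 t + a * e1 t) (fun t => c2 t + a * e2 t)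
       = Dj phi psi c1 c2 + a * Dj phi psi e1 e2) /\
  (* Dj(phi) is the Frechet derivative of j at phi (w.r.t. ||.||_1) *)
  (forall phi psi, InU h Rm phi psi ->
     forall eps, 0 < eps -> exists del, 0 < del /\
       forall phi2 psi2, InU h Rm phi2 psi2 ->
         lt1 h (fsub phi2 phi) (fsub psi2 psi) del ->
         forall c, bnd1 h (fsub phi2 phi) (fsub psi2 psi) c ->
           Rabs (j phi2 psi2 - j phi psi - Dj phi psi (fsub phi2 phi) (fsub psi2 psi))
             <= eps * c) /\
  (* j is C^1: phi |-> Dj(phi) continuous in operator norm on C^1 *)
  (forall phi psi, InU h Rm phi psi ->
     forall eps, 0 < eps -> exists del, 0 < del /\
       forall phi2 psi2, InU h Rm phi2 psi2 ->
         lt1 h (fsub phi2 phi) (fsub psi2 psi) del ->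
         forall c1 c2, C1_on (J h) c1 -> C1_on (J h) c2 ->
         forall c, bnd1 h c1 c2 c ->
           Rabs (Dj phi2 psi2 c1 c2 - Dj phi psi c1 c2) <= eps * c) /\
  (* (phi,chi) |-> D_e j(phi) chi continuous on U x C([-h,0],R^2) *)
  (forall phi psi c1 c2, InU h Rm phi psi -> cont_J h c1 -> cont_J h c2 ->
     forall eps, 0 < eps -> exists del, 0 < del /\
       forall phi2 psi2 d1 d2, InU h Rm phi2 psi2 -> cont_J h d1 -> cont_J h d2 ->
         lt1 h (fsub phi2 phi) (fsub psi2 psi) del ->
         lt0 h (fsub d1 c1) (fsub d2 c2) del ->
         Rabs (Dj phi2 psi2 d1 d2 - Dj phi psi c1 c2) <= eps).

Definition prop_sLb (h : R) (j : (R -> R) -> (R -> R) -> R) : Prop :=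
  forall B : (R -> R) -> (R -> R) -> Prop,
    (forall phi psi, B phi psi -> InUp h phi psi) ->
    (exists c, forall phi psi, B phi psi -> bnd1 h phi psi c) ->
    exists LB, forall phi1 psi1 phi2 psi2, B phi1 psi1 -> B phi2 psi2 ->
      forall c, bnd0 h (fsub phi1 phi2) (fsub psi1 psi2) c ->
        Rabs (j phi1 psi1 - j phi2 psi2) <= LB * c.

Definition H1 (h Rm : R) (j : (R -> R) -> (R -> R) -> R) : Prop :=
  prop_S h Rm j /\ prop_sLb h j /\
  (forall phi psi, InUp h phi psi -> 0 <= j phi psi) /\
  (forall B1 B2 : (R -> R) -> Prop,
     (forall phi psi, B1 phi -> B2 psi -> InUp h phi psi) ->
     (exists c, forall phi, B1 phi -> bnd1s h phi c) ->
     exists M, forall phi psi, B1 phi -> B2 psi -> Rabs (j phi psi) <= M).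

Definition I (Rm : R) (z : R) : Prop := Rm < z.

Definition H2 (Rm : R) (q : R -> R) : Prop :=
  (exists M, forall z, I Rm z -> Rabs (q z) <= M) /\ C1_on (I Rm) q.

Definition H3 (h Rm mu : R) (q : R -> R) (j : (R -> R) -> (R -> R) -> R) : Prop :=
  exists phi psi, InXp h Rm mu q j phi psi.

Definition H8 (q : R -> R) : Prop :=
  exists del zs, 0 < del /\ 0 <= zs /\ forall z, zs <= z -> q z <= - del.

Definition H9 (h : R) (j : (R -> R) -> (R -> R) -> R) : Prop :=
  forall K, 0 < K -> exists L, forall phi psi, InUp h phi psi ->
    (forall t, J h t -> L <= phi t) -> K <= j phi psi.

Definition seg (x : R -> R) (t : R) : R -> R := fun s => x (t + s).

Definition Jinf (h : R) (t : R) : Prop := - h <= t.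

Definition is_solution (h Rm mu : R) (q : R -> R) (j : (R -> R) -> (R -> R) -> R)
  (phi psi w v : R -> R) : Prop :=
  C1_on (Jinf h) w /\ C1_on (Jinf h) v /\
  (forall t, J h t -> w t = phi t /\ v t = psi t) /\
  (forall t, Jinf h t -> Rm < v t) /\
  (forall t, 0 < t -> has_deriv_within (Jinf h) w t (q (v t) * w t)) /\
  (forall t, 0 < t -> has_deriv_within (Jinf h) v t (j (seg w t) (seg v t) - mu * v t)).

From Stdlib Require Import Reals Lra Classical FunctionalExtensionality.
Open Scope R_scope.

(* Since [|q| <= M], [w] grows at most like [exp (M t)].  While [w >= L] on a window
   of length [h], (H9) gives [v' >= 1] whenever [v <= zs], so after a further time
   [zs] the variable [v] stays above [zs] and (H8) makes [w] decrease at rate at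
   least [del * L].  Hence [w] drops below [L] at some time [t0], and afterwards every
   excursion above [L] grows for at most [h + zs] before it decays, which bounds [w]
   by [L exp (M (h + zs))].  Applying (H9) needs [w, v >= 0]: for [w] this follows
   from the linear equation by a Gronwall argument; for [v] from [j >= 0] on [U_+]
   together with the C^1 bound on [j] when its second argument is shifted by a
   constant, which prevents [v] from dipping below [0]. *)

Lemma has_deriv_within_derivable_pt_lim D f x l r :
  0 < r -> (forall y, Rabs (y - x) < r -> D y) ->
  has_deriv_within D f x l -> derivable_pt_lim f x l.
Proof.
  intros Hr HD Hd eps Heps.
  destruct (Hd (eps / 2)) as [del [Hdel Hq]]; [lra |].
  assert (Hm : 0 < Rmin del r) by (apply Rmin_pos; lra).
  exists (mkposreal _ Hm). intros hh Hh0 Hhl. simpl in Hhl.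
  pose proof (Rmin_l del r). pose proof (Rmin_r del r).
  specialize (Hq (x + hh)). replace (x + hh - x) with hh in Hq by ring.
  assert (Rabs ((f (x + hh) - f x) / hh - l) <= eps / 2); [| lra].
  apply Hq; [apply HD; replace (x + hh - x) with hh by ring; lra | lra | lra].
Qed.

Lemma has_deriv_within_cont_within D f x l :
  has_deriv_within D f x l -> cont_within D f x.
Proof.
  intros Hd eps Heps.
  destruct (Hd 1) as [del [Hdel Hq]]; [lra |].
  set (k := Rabs l + 1).
  assert (Hk : 0 < k) by (unfold k; pose proof (Rabs_pos l); lra).
  exists (Rmin del (eps / k)). split.
  { apply Rmin_pos; [lra | apply Rdiv_lt_0_compat; lra]. }
  intros y Dy Hy. pose proof (Rmin_l del (eps / k)). pose proof (Rmin_r del (eps / k)).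
  destruct (Req_dec y x) as [-> | Hne].
  { rewrite Rminus_diag, Rabs_R0; lra. }
  specialize (Hq y Dy Hne ltac:(lra)).
  assert (Hyx : y - x <> 0) by lra.
  replace (f y - f x) with (((f y - f x) / (y - x) - l) * (y - x) + l * (y - x))
    by (field; exact Hyx).
  eapply Rle_trans; [apply Rabs_triang |]. rewrite !Rabs_mult.
  assert (Rabs (y - x) * k <= eps).
  { replace eps with (eps / k * k) by (field; lra). apply Rmult_le_compat_r; lra. }
  assert (Rabs ((f y - f x) / (y - x) - l) * Rabs (y - x) <= 1 * Rabs (y - x)).
  { apply Rmult_le_compat_r; [apply Rabs_pos | lra]. }
  unfold k in *. pose proof (Rabs_pos l). pose proof (Rabs_pos (y - x)). nra.
Qed.

Lemma C1_on_cont_on D f : C1_on D f -> cont_on D f.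
Proof. intros [f' [Hd _]] x Dx. exact (has_deriv_within_cont_within D f x (f' x) (Hd x Dx)). Qed.

Lemma MVT_open_interval f f' a b : a < b ->
  (forall c, a < c < b -> derivable_pt_lim f c (f' c)) ->
  (forall c, a <= c <= b -> continuity_pt f c) ->
  exists c, a < c < b /\ f b - f a = f' c * (b - a).
Proof.
  intros Hab Hd Hc.
  assert (pr1 : forall c, a < c < b -> derivable_pt f c)
    by (intros c Hc'; exists (f' c); apply Hd; exact Hc').
  assert (pr2 : forall c, a < c < b -> derivable_pt id c) by (intros; apply derivable_pt_id).
  destruct (MVT f id a b pr1 pr2 Hab Hc) as [c [P E]].
  { intros; apply derivable_continuous_pt, derivable_pt_id. }
  exists c. split; auto.
  rewrite (derive_pt_eq_0 _ _ _ (pr1 c P) (Hd c P)) in E.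
  rewrite (derive_pt_eq_0 _ _ _ (pr2 c P) (derivable_pt_lim_id c)) in E.
  unfold id in E. lra.
Qed.

Lemma MVT_upper_bound f f' a b k : a <= b ->
  (forall c, a < c < b -> derivable_pt_lim f c (f' c)) ->
  (forall c, a <= c <= b -> continuity_pt f c) ->
  (forall c, a < c < b -> f' c <= k) -> f b - f a <= k * (b - a).
Proof.
  intros Hab Hd Hc Hk. destruct (Req_dec a b) as [-> | Hne]; [lra |].
  destruct (MVT_open_interval f f' a b) as [c [Hc1 ->]]; auto; [lra |].
  apply Rmult_le_compat_r; [lra | auto].
Qed.

Lemma MVT_lower_bound f f' a b k : a <= b ->
  (forall c, a < c < b -> derivable_pt_lim f c (f' c)) ->
  (forall c, a <= c <= b -> continuity_pt f c) ->
  (forall c, a < c < b -> k <= f' c) -> k * (b - a) <= f b - f a.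
Proof.
  intros Hab Hd Hc Hk. destruct (Req_dec a b) as [-> | Hne]; [lra |].
  destruct (MVT_open_interval f f' a b) as [c [Hc1 ->]]; auto; [lra |].
  apply Rmult_le_compat_r; [lra | auto].
Qed.

Lemma last_crossing f a c z : a < c ->
  (forall x, a <= x <= c -> continuity_pt f x) -> z <= f a -> f c < z ->
  exists p, a <= p < c /\ f p = z /\ forall x, p < x <= c -> f x < z.
Proof.
  intros Hac Hc Ha Hcz.
  set (E := fun x => a <= x <= c /\ z <= f x).
  assert (Hb : bound E) by (exists c; intros x [Hx _]; lra).
  destruct (completeness E Hb) as [p [Hub Hlub]]; [exists a; split; [lra | auto] |].
  assert (Hap : a <= p) by (apply Hub; split; [lra | auto]).
  assert (Hpc : p <= c) by (apply Hlub; intros x [Hx _]; lra).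
  assert (Hafter : forall x, p < x <= c -> f x < z).
  { intros x Hx. apply Rnot_le_lt; intro Hzx.
    assert (x <= p) by (apply Hub; split; lra). lra. }
  assert (Hfp : z <= f p).
  { apply Rnot_lt_le; intro Hlt.
    destruct (Hc p (conj Hap Hpc) (z - f p)) as [d [Hd Hnear]]; [lra |].
    assert (Hx : exists x, E x /\ p - d < x).
    { apply NNPP; intro Hno.
      assert (p <= p - d); [| lra].
      apply Hlub. intros x Ex. apply Rnot_lt_le; intro.
      apply Hno; exists x; split; auto. }
    destruct Hx as [x [[Hx1 Hx2] Hx3]].
    assert (Hxp : x <= p) by (apply Hub; split; auto).
    destruct (Req_dec x p) as [-> | Hne]; [lra |].
    assert (Rabs (f x - f p) < z - f p).
    { apply (Hnear x). split; [split; [exact Logic.I | auto] |].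
      simpl. unfold R_dist. rewrite Rabs_left; lra. }
    unfold Rabs in *; destruct Rcase_abs in *; lra. }
  exists p. split; [| split; auto].
  { split; auto. destruct (Req_dec p c) as [-> | ]; lra. }
  apply Rle_antisym; auto. apply Rnot_lt_le; intro Hlt.
  assert (Hpc' : p < c) by (destruct (Req_dec p c) as [-> | ]; lra).
  destruct (Hc p (conj Hap Hpc) (f p - z)) as [d [Hd Hnear]]; [lra |].
  set (x := Rmin (p + d / 2) c).
  assert (Hx : p < x <= c) by (unfold x; apply Rmin_case_strong; intros; lra).
  assert (Rabs (f x - f p) < f p - z).
  { apply (Hnear x). split; [split; [exact Logic.I | lra] |].
    simpl. unfold R_dist. rewrite Rabs_right; [| lra].
    unfold x; apply Rmin_case_strong; intros; lra. }
  pose proof (Hafter x Hx). unfold Rabs in *; destruct Rcase_abs in *; lra.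
Qed.

Lemma first_exit f a c : a < c ->
  (forall x, a <= x <= c -> continuity_pt f x) -> 0 <= f a -> f c < 0 ->
  exists s, a <= s < c /\ (forall x, a <= x <= s -> 0 <= f x) /\
    forall eta, 0 < eta -> exists x, s < x < s + eta /\ x <= c /\ f x < 0.
Proof.
  intros Hac Hc Ha Hcz.
  set (E := fun x => a <= x <= c /\ forall y, a <= y <= x -> 0 <= f y).
  assert (Ea : E a) by (split; [lra | intros y Hy; replace y with a by lra; auto]).
  assert (Hb : bound E) by (exists c; intros x [Hx _]; lra).
  destruct (completeness E Hb (ex_intro _ a Ea)) as [s [Hub Hlub]].
  assert (Has : a <= s) by (apply Hub; exact Ea).
  assert (Hsc : s <= c) by (apply Hlub; intros x [Hx _]; lra).
  assert (Hbefore : forall y, a <= y < s -> 0 <= f y).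
  { intros y Hy. destruct (classic (exists x, E x /\ y < x)) as [[x [[_ Hx] Hyx]] | Hno].
    - apply Hx; lra.
    - assert (s <= y); [| lra]. apply Hlub. intros x Ex.
      apply Rnot_lt_le; intro; apply Hno; exists x; split; auto. }
  assert (Hfs : 0 <= f s).
  { destruct (Req_dec s a) as [-> | Hne]; auto.
    apply Rnot_lt_le; intro Hlt.
    destruct (Hc s (conj Has Hsc) (- f s)) as [d [Hd Hnear]]; [lra |].
    set (y := Rmax a (s - d / 2)).
    assert (Hy : a <= y < s) by (unfold y; apply Rmax_case_strong; intros; lra).
    assert (Rabs (f y - f s) < - f s).
    { apply (Hnear y). split; [split; [exact Logic.I | lra] |].
      simpl. unfold R_dist. rewrite Rabs_left; [| lra].
      unfold y; apply Rmax_case_strong; intros; lra. }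
    pose proof (Hbefore y Hy). unfold Rabs in *; destruct Rcase_abs in *; lra. }
  assert (Hall : forall x, a <= x <= s -> 0 <= f x).
  { intros x Hx. destruct (Req_dec x s) as [-> |]; auto. apply Hbefore; lra. }
  assert (Hsc' : s < c) by (destruct (Req_dec s c) as [-> |]; lra).
  exists s. split; [lra | split; auto].
  intros eta Heta. apply NNPP; intro Hno.
  set (x0 := Rmin (s + eta / 2) c).
  assert (Hx0 : s < x0 <= c /\ x0 <= s + eta / 2)
    by (unfold x0; apply Rmin_case_strong; intros; lra).
  assert (x0 <= s); [| lra].
  apply Hub. split; [lra |]. intros y Hy.
  destruct (Rle_dec y s); [apply Hall; lra |].
  apply Rnot_lt_le; intro Hlt. apply Hno. exists y. repeat split; lra.
Qed.

Lemma rise_to_level f f' a b z : a <= b ->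
  (forall x, a <= x <= b -> continuity_pt f x) ->
  (forall c, a < c < b -> derivable_pt_lim f c (f' c)) ->
  (forall c, a < c < b -> f c <= z -> 1 <= f' c) ->
  z - f a <= b - a -> z <= f b.
Proof.
  intros Hab Hc Hd Hslope Ha. apply Rnot_lt_le; intro Hb.
  destruct (classic (exists x, a <= x <= b /\ z <= f x)) as [[x [Hx Hzx]] | Hno].
  - assert (Hxb : x < b) by (destruct (Req_dec x b) as [-> |]; lra).
    destruct (last_crossing f x b z) as [p [Hp [Hfp Hbelow]]]; auto.
    { intros; apply Hc; lra. }
    assert (1 * (b - p) <= f b - f p); [| lra].
    apply MVT_lower_bound with f'; try lra.
    + intros; apply Hd; lra.
    + intros; apply Hc; lra.
    + intros c Hc'. apply Hslope; [lra |]. left; apply Hbelow; lra.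
  - assert (1 * (b - a) <= f b - f a); [| lra].
    apply MVT_lower_bound with f'; auto.
    intros c Hc'. apply Hslope; auto.
    apply Rnot_lt_le; intro. apply Hno; exists c; split; lra.
Qed.

Lemma derivable_pt_lim_exp_scal k x :
  derivable_pt_lim (fun y => exp (k * y)) x (k * exp (k * x)).
Proof.
  replace (k * exp (k * x)) with (exp (k * x) * k) by ring.
  apply (derivable_pt_lim_comp (fun y => k * y) exp).
  - pose proof (derivable_pt_lim_scal id k x 1 (derivable_pt_lim_id x)) as Hs.
    rewrite Rmult_1_r in Hs. exact Hs.
  - apply derivable_pt_lim_exp.
Qed.

Lemma gronwall f f' a b k : a <= b ->
  (forall x, a <= x <= b -> continuity_pt f x) ->
  (forall c, a < c < b -> derivable_pt_lim f c (f' c)) ->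
  (forall c, a < c < b -> f' c <= k * f c) ->
  f b <= f a * exp (k * (b - a)).
Proof.
  intros Hab Hc Hd Hslope.
  assert (Hg : f b * exp (- k * b) - f a * exp (- k * a) <= 0 * (b - a)).
  { apply (MVT_upper_bound (fun y => f y * exp (- k * y))
      (fun y => f' y * exp (- k * y) + f y * (- k * exp (- k * y)))); auto.
    - intros c Hc'. apply (derivable_pt_lim_mult f (fun y => exp (- k * y))); auto.
      apply derivable_pt_lim_exp_scal.
    - intros c Hc'. apply (continuity_pt_mult f (fun y => exp (- k * y))); auto.
      apply derivable_continuous_pt. eexists. apply derivable_pt_lim_exp_scal.
    - intros c Hc'.
      replace (f' c * exp (- k * c) + f c * (- k * exp (- k * c)))
        with ((f' c - k * f c) * exp (- k * c)) by ring.
      pose proof (Hslope c Hc'). pose proof (exp_pos (- k * c)). nra. }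
  assert (Hrescale : forall y, f y * exp (- k * y) * exp (k * b) = f y * exp (k * (b - y))).
  { intro y. rewrite Rmult_assoc, <- exp_plus. f_equal. f_equal. ring. }
  replace (f b) with (f b * exp (- k * b) * exp (k * b))
    by (rewrite Hrescale, Rminus_diag, Rmult_0_r, exp_0; ring).
  rewrite <- Hrescale. apply Rmult_le_compat_r; [left; apply exp_pos | lra].
Qed.

Lemma has_deriv_within_Jinf h f t l : 0 < h -> 0 <= t ->
  has_deriv_within (Jinf h) f t l -> derivable_pt_lim f t l.
Proof.
  intros Hh Ht. apply has_deriv_within_derivable_pt_lim with h; auto.
  intros y Hy. unfold Jinf. unfold Rabs in Hy; destruct Rcase_abs in Hy; lra.
Qed.

Lemma C1_on_Jinf_continuity_pt h f t : 0 < h -> 0 <= t ->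
  C1_on (Jinf h) f -> continuity_pt f t.
Proof.
  intros Hh Ht [f' [Hd _]]. apply derivable_continuous_pt. exists (f' t).
  apply has_deriv_within_Jinf with h; auto. apply Hd. unfold Jinf; lra.
Qed.

(* Clamping at [-h] turns continuity relative to [[-h, oo)] into plain continuity,
   so that Heine's theorem applies. *)
Lemma continuity_pt_clamp h f x : cont_on (Jinf h) f ->
  continuity_pt (fun y => f (Rmax y (- h))) x.
Proof.
  intros Hc eps Heps.
  assert (Jx : Jinf h (Rmax x (- h))) by apply Rmax_r.
  destruct (Hc _ Jx (eps / 2)) as [del [Hdel Hnear]]; [lra |].
  exists del. split; [lra |]. intros y [_ Hy]. simpl in *. unfold R_dist in *.
  assert (Rabs (f (Rmax y (- h)) - f (Rmax x (- h))) <= eps / 2); [| lra].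
  apply Hnear; [apply Rmax_r |].
  eapply Rle_lt_trans; [| exact Hy].
  unfold Rmax; destruct (Rle_dec y (- h)), (Rle_dec x (- h));
    unfold Rabs; repeat destruct Rcase_abs; lra.
Qed.

Lemma cont_on_Jinf_uniform h f a e : cont_on (Jinf h) f -> 0 < e ->
  exists del, 0 < del /\ forall y z, - h <= y <= a -> - h <= z <= a ->
    Rabs (y - z) < del -> Rabs (f y - f z) < e.
Proof.
  intros Hc He.
  destruct (Heine (fun y => f (Rmax y (- h))) (fun c => - h <= c <= a) (compact_P3 (- h) a)
     (fun x _ => continuity_pt_clamp h f x Hc) (mkposreal e He)) as [[del Hdel] Hu].
  exists del. split; auto. intros y z Hy Hz Hyz.
  specialize (Hu y z Hy Hz Hyz). simpl in Hu. rewrite !Rmax_left in Hu by lra. exact Hu.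
Qed.

Lemma deriv_on_seg h f f' s : 0 <= s -> deriv_on (Jinf h) f f' ->
  deriv_on (J h) (seg f s) (seg f' s).
Proof.
  intros Hs Hd th Jth eps Heps. unfold J in Jth.
  destruct (Hd (s + th) ltac:(unfold Jinf; lra) eps Heps) as [del [Hdel Hq]].
  exists del. split; auto. intros y Jy Hne Hy. unfold seg, J in *.
  replace (y - th) with (s + y - (s + th)) by ring.
  apply Hq; [unfold Jinf; lra | intro; apply Hne; lra |].
  replace (s + y - (s + th)) with (y - th) by ring. exact Hy.
Qed.

Lemma cont_on_seg h f s : 0 <= s -> cont_on (Jinf h) f -> cont_on (J h) (seg f s).
Proof.
  intros Hs Hc th Jth eps Heps. unfold J in Jth.
  destruct (Hc (s + th) ltac:(unfold Jinf; lra) eps Heps) as [del [Hdel Hq]].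
  exists del. split; auto. intros y Jy Hy. unfold seg, J in *.
  apply Hq; [unfold Jinf; lra |].
  replace (s + y - (s + th)) with (y - th) by ring. exact Hy.
Qed.

Lemma C1_on_seg h f s : 0 <= s -> C1_on (Jinf h) f -> C1_on (J h) (seg f s).
Proof.
  intros Hs [f' [Hd Hc]]. exists (seg f' s).
  split; [apply deriv_on_seg | apply cont_on_seg]; auto.
Qed.

Lemma deriv_on_plus_const D f f' b : deriv_on D f f' -> deriv_on D (fun x => f x + b) f'.
Proof.
  intros Hd x Dx eps Heps. destruct (Hd x Dx eps Heps) as [del [Hdel Hq]].
  exists del; split; auto. intros y Dy Hne Hy.
  replace (f y + b - (f x + b)) with (f y - f x) by ring. auto.
Qed.

Lemma C1_on_plus_const D f b : C1_on D f -> C1_on D (fun x => f x + b).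
Proof. intros [f' [Hd Hc]]. exists f'. split; auto. apply deriv_on_plus_const; auto. Qed.

Lemma deriv_on_sub D f f' g g' : deriv_on D f f' -> deriv_on D g g' ->
  deriv_on D (fsub f g) (fun x => f' x - g' x).
Proof.
  intros Hf Hg x Dx eps Heps.
  destruct (Hf x Dx (eps / 2)) as [d1 [Hd1 Hq1]]; [lra |].
  destruct (Hg x Dx (eps / 2)) as [d2 [Hd2 Hq2]]; [lra |].
  exists (Rmin d1 d2). split; [apply Rmin_pos; auto |].
  intros y Dy Hne Hy. pose proof (Rmin_l d1 d2); pose proof (Rmin_r d1 d2).
  specialize (Hq1 y Dy Hne ltac:(lra)). specialize (Hq2 y Dy Hne ltac:(lra)).
  unfold fsub. assert (Hyx : y - x <> 0) by lra.
  replace ((f y - g y - (f x - g x)) / (y - x) - (f' x - g' x)) with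
    (((f y - f x) / (y - x) - f' x) - ((g y - g x) / (y - x) - g' x)) by (field; auto).
  eapply Rle_trans; [apply Rabs_triang |]. rewrite Rabs_Ropp. lra.
Qed.

Lemma deriv_on_const D c : deriv_on D (fun _ => c) (fun _ => 0).
Proof.
  intros x Dx eps Heps. exists 1. split; [lra |]. intros y Dy Hne Hy.
  replace ((c - c) / (y - x) - 0) with 0 by (field; lra). rewrite Rabs_R0; lra.
Qed.

Lemma cont_on_const D c : cont_on D (fun _ => c).
Proof.
  intros x Dx eps Heps. exists 1. split; [lra |]. intros y Dy Hy.
  rewrite Rminus_diag, Rabs_R0; lra.
Qed.

Lemma bnd1_const h c : bnd1 h (fun _ => 0) (fun _ => c) (Rabs c).
Proof.
  exists (fun _ => 0), (fun _ => 0), (Rabs c), 0.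
  split; [apply deriv_on_const |]. split; [apply deriv_on_const |].
  split; [| split; [| lra]]; intros x _; rewrite ?Rabs_R0.
  - split; [apply Rabs_pos | lra].
  - lra.
Qed.

Lemma seg_uniformly_close h f s e : 0 <= s -> cont_on (Jinf h) f -> 0 < e ->
  exists eta, 0 < eta /\ forall r th, s <= r <= s + eta -> J h th ->
    Rabs (f (r + th) - f (s + th)) < e.
Proof.
  intros Hs Hc He.
  destruct (cont_on_Jinf_uniform h f (s + 1) e Hc He) as [del [Hdel Hu]].
  exists (Rmin (del / 2) 1). split; [apply Rmin_pos; lra |].
  intros r th Hr Jth. pose proof (Rmin_l (del / 2) 1). pose proof (Rmin_r (del / 2) 1).
  unfold J in Jth.
  apply Hu; try lra.
  replace (r + th - (s + th)) with (r - s) by ring. rewrite Rabs_right; lra.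
Qed.

Lemma seg_shift_close h f g s e : 0 <= s -> C1_on (Jinf h) f -> C1_on (Jinf h) g -> 0 < e ->
  exists eta, 0 < eta /\ forall r c, s <= r <= s + eta -> 0 <= c ->
    bnd1 h (fsub (seg f r) (seg f s)) (fsub (fun t => seg g r t + c) (seg g s)) (e + c).
Proof.
  intros Hs Cf Cg He.
  pose proof (C1_on_cont_on _ _ Cf) as Cf0. pose proof (C1_on_cont_on _ _ Cg) as Cg0.
  destruct Cf as [f' [Df Cf']], Cg as [g' [Dg Cg']].
  destruct (seg_uniformly_close h f s (e / 2)) as [e1 [He1 U1]]; auto; [lra |].
  destruct (seg_uniformly_close h f' s (e / 2)) as [e2 [He2 U2]]; auto; [lra |].
  destruct (seg_uniformly_close h g s (e / 2)) as [e3 [He3 U3]]; auto; [lra |].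
  destruct (seg_uniformly_close h g' s (e / 2)) as [e4 [He4 U4]]; auto; [lra |].
  set (eta := Rmin (Rmin e1 e2) (Rmin e3 e4)).
  assert (Heta : eta <= e1 /\ eta <= e2 /\ eta <= e3 /\ eta <= e4).
  { unfold eta. repeat split; repeat apply Rmin_case_strong; intros; lra. }
  exists eta. split; [unfold eta; repeat apply Rmin_pos; auto |].
  intros r c Hr Hc.
  exists (fun t => seg f' r t - seg f' s t), (fun t => seg g' r t - seg g' s t),
    (e / 2 + c), (e / 2).
  split; [apply deriv_on_sub; apply deriv_on_seg; auto; lra |].
  split; [apply deriv_on_sub; [apply deriv_on_plus_const |]; apply deriv_on_seg; auto; lra |].
  split; [| split; [| lra]]; intros th Jth; unfold fsub, seg.
  - pose proof (U1 r th ltac:(lra) Jth). pose proof (U3 r th ltac:(lra) Jth).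
    split; [lra |].
    replace (g (r + th) + c - g (s + th)) with ((g (r + th) - g (s + th)) + c) by ring.
    eapply Rle_trans; [apply Rabs_triang |]. rewrite (Rabs_right c); lra.
  - pose proof (U2 r th ltac:(lra) Jth). pose proof (U4 r th ltac:(lra) Jth). lra.
Qed.

Section FrechetDerivative.

Variables (h Rm : R) (j : (R -> R) -> (R -> R) -> R)
  (Dj : (R -> R) -> (R -> R) -> (R -> R) -> (R -> R) -> R).

Hypothesis Dj_linear : forall phi psi, InU h Rm phi psi ->
  forall c1 c2 e1 e2 a, cont_J h c1 -> cont_J h c2 -> cont_J h e1 -> cont_J h e2 ->
    Dj phi psi (fun t => c1 t + a * e1 t) (fun t => c2 t + a * e2 t)
    = Dj phi psi c1 c2 + a * Dj phi psi e1 e2.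

Hypothesis Dj_frechet : forall phi psi, InU h Rm phi psi ->
  forall eps, 0 < eps -> exists del, 0 < del /\
    forall phi2 psi2, InU h Rm phi2 psi2 ->
      lt1 h (fsub phi2 phi) (fsub psi2 psi) del ->
      forall c, bnd1 h (fsub phi2 phi) (fsub psi2 psi) c ->
        Rabs (j phi2 psi2 - j phi psi - Dj phi psi (fsub phi2 phi) (fsub psi2 psi))
          <= eps * c.

Hypothesis Dj_continuous : forall phi psi c1 c2, InU h Rm phi psi ->
  cont_J h c1 -> cont_J h c2 ->
  forall eps, 0 < eps -> exists del, 0 < del /\
    forall phi2 psi2 d1 d2, InU h Rm phi2 psi2 -> cont_J h d1 -> cont_J h d2 ->
      lt1 h (fsub phi2 phi) (fsub psi2 psi) del ->
      lt0 h (fsub d1 c1) (fsub d2 c2) del ->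
      Rabs (Dj phi2 psi2 d1 d2 - Dj phi psi c1 c2) <= eps.

Lemma Dj_const_scale phi psi a : InU h Rm phi psi ->
  Dj phi psi (fun _ => 0) (fun _ => a) = a * Dj phi psi (fun _ => 0) (fun _ => 1).
Proof.
  intro HU.
  assert (cJ : forall c, cont_J h (fun _ => c)) by (intro; apply cont_on_const).
  pose proof (Dj_linear phi psi HU (fun _ => 0) (fun _ => 0) (fun _ => 0) (fun _ => 0) 1
    (cJ 0) (cJ 0) (cJ 0) (cJ 0)) as Hzero.
  pose proof (Dj_linear phi psi HU (fun _ => 0) (fun _ => 0) (fun _ => 0) (fun _ => 1) a
    (cJ 0) (cJ 0) (cJ 0) (cJ 1)) as Hscale.
  cbv beta in Hzero, Hscale.
  assert (E0 : forall b, (fun _ : R => 0 + b * 0) = (fun _ : R => 0))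
    by (intro; apply functional_extensionality; intro; ring).
  assert (Ea : (fun _ : R => 0 + a * 1) = (fun _ : R => a))
    by (apply functional_extensionality; intro; ring).
  rewrite E0 in Hzero. rewrite E0, Ea in Hscale. lra.
Qed.

Lemma j_shift_derivable phi psi lo b :
  (forall b', lo < b' -> InU h Rm phi (fun t => psi t + b')) -> lo < b ->
  derivable_pt_lim (fun b' => j phi (fun t => psi t + b')) b
    (Dj phi (fun t => psi t + b) (fun _ => 0) (fun _ => 1)).
Proof.
  intros HU Hb eps Heps.
  destruct (Dj_frechet phi (fun t => psi t + b) (HU b Hb) (eps / 2)) as [del [Hdel Hfr]];
    [lra |].
  assert (Hm : 0 < Rmin del (b - lo)) by (apply Rmin_pos; lra).
  exists (mkposreal _ Hm). intros hh Hh0 Hhl. simpl in Hhl.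
  pose proof (Rmin_l del (b - lo)). pose proof (Rmin_r del (b - lo)).
  assert (Hlo : lo < b + hh) by (unfold Rabs in Hhl; destruct Rcase_abs in Hhl; lra).
  specialize (Hfr phi (fun t => psi t + (b + hh)) (HU _ Hlo)).
  assert (E1 : fsub phi phi = fun _ => 0)
    by (apply functional_extensionality; intro; unfold fsub; ring).
  assert (E2 : fsub (fun t => psi t + (b + hh)) (fun t => psi t + b) = fun _ => hh)
    by (apply functional_extensionality; intro; unfold fsub; ring).
  rewrite E1, E2, Dj_const_scale in Hfr by (apply HU; auto).
  assert (Hlt : lt1 h (fun _ => 0) (fun _ => hh) del)
    by (exists (Rabs hh); split; [lra | apply bnd1_const]).
  specialize (Hfr Hlt (Rabs hh) (bnd1_const h hh)).
  set (D := Dj phi (fun t => psi t + b) (fun _ => 0) (fun _ => 1)) in *.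
  set (g1 := j phi (fun t => psi t + (b + hh))) in *.
  set (g0 := j phi (fun t => psi t + b)) in *.
  replace (g1 - g0 - hh * D) with (((g1 - g0) / hh - D) * hh) in Hfr by (field; auto).
  rewrite Rabs_mult in Hfr.
  assert (0 < Rabs hh) by (apply Rabs_pos_lt; auto).
  assert (Rabs ((g1 - g0) / hh - D) <= eps / 2); [| lra].
  apply Rmult_le_reg_r with (Rabs hh); auto.
Qed.

Lemma j_shift_lower_bound phi psi lo a C : lo < 0 -> 0 < a ->
  (forall b, lo < b -> InU h Rm phi (fun t => psi t + b)) ->
  (forall c, 0 < c < a -> Dj phi (fun t => psi t + c) (fun _ => 0) (fun _ => 1) <= C) ->
  j phi (fun t => psi t + a) - C * a <= j phi psi.
Proof.
  intros Hlo Ha HU HC.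
  destruct (MVT_cor2 (fun b => j phi (fun t => psi t + b))
              (fun b => Dj phi (fun t => psi t + b) (fun _ => 0) (fun _ => 1)) 0 a Ha)
    as [c [Ec Hc]].
  { intros c Hc. apply j_shift_derivable with lo; auto. lra. }
  assert (E0 : (fun t => psi t + 0) = psi) by (apply functional_extensionality; intro; ring).
  rewrite E0 in Ec. rewrite Rminus_0_r in Ec.
  pose proof (HC c Hc). nra.
Qed.

Lemma Dj_shift_locally_bounded f g s : 0 <= s ->
  C1_on (Jinf h) f -> C1_on (Jinf h) g -> InU h Rm (seg f s) (seg g s) ->
  exists C eta, 0 < C /\ 0 < eta /\ forall r c, s <= r <= s + eta -> 0 <= c <= eta ->
    InU h Rm (seg f r) (fun t => seg g r t + c) ->
    Dj (seg f r) (fun t => seg g r t + c) (fun _ => 0) (fun _ => 1) <= C.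
Proof.
  intros Hs Cf Cg HUs.
  destruct (Dj_continuous _ _ (fun _ => 0) (fun _ => 1) HUs (cont_on_const _ 0)
              (cont_on_const _ 1) 1 Rlt_0_1) as [del [Hdel Hnear]].
  destruct (seg_shift_close h f g s (del / 2)) as [eta [Heta Hclose]]; auto; [lra |].
  set (D0 := Dj (seg f s) (seg g s) (fun _ => 0) (fun _ => 1)).
  exists (Rabs D0 + 1), (Rmin eta (del / 4)).
  pose proof (Rmin_l eta (del / 4)). pose proof (Rmin_r eta (del / 4)).
  split; [pose proof (Rabs_pos D0); lra |]. split; [apply Rmin_pos; lra |].
  intros r c Hr Hc HU.
  assert (Hclose1 : lt1 h (fsub (seg f r) (seg f s))
                          (fsub (fun t => seg g r t + c) (seg g s)) del).
  { exists (del / 2 + c). split; [lra | apply Hclose; lra]. }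
  assert (Hclose0 : lt0 h (fsub (fun _ => 0) (fun _ => 0)) (fsub (fun _ => 1) (fun _ => 1)) del).
  { exists 0. split; auto. intros th _. unfold fsub. rewrite !Rminus_diag, Rabs_R0. lra. }
  pose proof (Hnear _ _ _ _ HU (cont_on_const _ 0) (cont_on_const _ 1) Hclose1 Hclose0)
    as Hdiff.
  fold D0 in Hdiff. pose proof (Rle_abs (Dj (seg f r) (fun t => seg g r t + c)
                                       (fun _ => 0) (fun _ => 1) - D0)).
  pose proof (Rle_abs D0). lra.
Qed.

End FrechetDerivative.

Section Solution.

Variables (h Rm mu : R) (q : R -> R) (j : (R -> R) -> (R -> R) -> R)
  (phi psi w v : R -> R).

Hypothesis h_pos : 0 < h.
Hypothesis Rm_neg : Rm < 0.
Hypothesis mu_nonneg : 0 <= mu.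
Hypothesis j_smooth : prop_S h Rm j.
Hypothesis j_nonneg : forall phi psi, InUp h phi psi -> 0 <= j phi psi.
Hypothesis phi_nonneg : forall t, J h t -> 0 <= phi t.
Hypothesis psi_nonneg : forall t, J h t -> 0 <= psi t.
Hypothesis solution : is_solution h Rm mu q j phi psi w v.

Variable M : R.
Hypothesis q_le_M : forall z, I Rm z -> q z <= M.

Lemma w_derivable t : 0 < t -> derivable_pt_lim w t (q (v t) * w t).
Proof.
  destruct solution as [_ [_ [_ [_ [Dw _]]]]].
  intro Ht. apply has_deriv_within_Jinf with h; auto; lra.
Qed.

Lemma v_derivable t : 0 < t ->
  derivable_pt_lim v t (j (seg w t) (seg v t) - mu * v t).
Proof.
  destruct solution as [_ [_ [_ [_ [_ Dv]]]]].
  intro Ht. apply has_deriv_within_Jinf with h; auto; lra.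
Qed.

Lemma w_continuous t : 0 <= t -> continuity_pt w t.
Proof. destruct solution as [Cw _]. intro Ht. apply C1_on_Jinf_continuity_pt with h; auto. Qed.

Lemma v_continuous t : 0 <= t -> continuity_pt v t.
Proof. destruct solution as [_ [Cv _]]. intro Ht. apply C1_on_Jinf_continuity_pt with h; auto. Qed.

Lemma q_v_le_M t : Jinf h t -> q (v t) <= M.
Proof. destruct solution as [_ [_ [_ [Vpos _]]]]. intro Jt. apply q_le_M, Vpos, Jt. Qed.

Lemma w_v_nonneg_initial t : J h t -> 0 <= w t /\ 0 <= v t.
Proof.
  destruct solution as [_ [_ [Init _]]].
  intro Jt. destruct (Init t Jt) as [-> ->]. auto.
Qed.

(* After the last zero [p] of [w] before a negative value, [-w] satisfies
   [(-w)' <= M (-w)] and starts from [0]. *)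
Lemma w_nonneg t : Jinf h t -> 0 <= w t.
Proof.
  intro Jt. destruct (Rle_dec t 0) as [Ht | Ht].
  { apply w_v_nonneg_initial. unfold J, Jinf in *; lra. }
  apply Rnot_lt_le; intro Hneg.
  assert (Hw0 : 0 <= w 0) by (apply w_v_nonneg_initial; unfold J; lra).
  destruct (last_crossing w 0 t 0) as [p [Hp [Hwp Hbelow]]]; try lra.
  { intros; apply w_continuous; lra. }
  assert (- w t <= - w p * exp (M * (t - p))); [| rewrite Hwp in *; lra].
  apply (gronwall (fun x => - w x) (fun x => - (q (v x) * w x))); try lra.
  - intros x Hx. apply continuity_pt_opp, w_continuous. lra.
  - intros c Hc. apply derivable_pt_lim_opp, w_derivable. lra.
  - intros c Hc. pose proof (Hbelow c ltac:(lra)).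
    pose proof (q_v_le_M c ltac:(unfold Jinf; lra)). nra.
Qed.

Lemma w_growth p y : 0 <= p <= y -> w y <= w p * exp (M * (y - p)).
Proof.
  intro Hpy. apply (gronwall w (fun x => q (v x) * w x)); try lra.
  - intros; apply w_continuous; lra.
  - intros; apply w_derivable; lra.
  - intros c Hc. pose proof (w_nonneg c ltac:(unfold Jinf; lra)).
    pose proof (q_v_le_M c ltac:(unfold Jinf; lra)). nra.
Qed.

Lemma j_seg_locally_lower_bounded s : 0 <= s -> InU h Rm (seg w s) (seg v s) ->
  exists C eta, 0 < C /\ 0 < eta /\ forall r a, s <= r <= s + eta -> 0 < a <= eta ->
    a < - Rm -> (forall th, J h th -> - a <= v (r + th)) ->
    - C * a <= j (seg w r) (seg v r).
Proof.
  intros Hs HUs.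
  destruct j_smooth as [Dj [Dj_lin [Dj_fr [_ Dj_cont]]]].
  destruct solution as [Cw [Cv _]].
  destruct (Dj_shift_locally_bounded h Rm Dj Dj_cont w v s) as [C [eta [HC [Heta HDj]]]];
    auto.
  exists C, eta. split; [exact HC | split; [exact Heta |]].
  intros r a Hr Ha HaRm Hseg.
  assert (HU : forall b, Rm + a < b -> InU h Rm (seg w r) (fun th => seg v r th + b)).
  { intros b Hb. split; [apply C1_on_seg; auto; lra |].
    split; [apply C1_on_plus_const, C1_on_seg; auto; lra |].
    intros th Jth. unfold seg. pose proof (Hseg th Jth). lra. }
  assert (0 <= j (seg w r) (fun th => seg v r th + a)).
  { apply j_nonneg. split; [apply C1_on_seg; auto; lra |].
    split; [apply C1_on_plus_const, C1_on_seg; auto; lra |].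
    intros th Jth. unfold seg. pose proof (Hseg th Jth).
    split; [apply w_nonneg; unfold J, Jinf in *; lra | lra]. }
  assert (j (seg w r) (fun th => seg v r th + a) - C * a <= j (seg w r) (seg v r)); [| lra].
  apply (j_shift_lower_bound h Rm j Dj Dj_lin Dj_fr) with (Rm + a); try lra; auto.
  intros c Hc. apply HDj; try lra. apply HU. lra.
Qed.

(* Near [s], a dip of [v] to a minimum [-a < 0] at [tau] forces [v' >= - C a] after
   the last zero [p] of [v] before [tau] (there [- mu v >= 0]), so the dip takes a
   time [tau - p >= 1/C], which is impossible on a short window. *)
Lemma v_nonneg_near s : 0 <= s -> (forall y, - h <= y <= s -> 0 <= v y) ->
  exists eta, 0 < eta /\ forall x, s <= x <= s + eta -> 0 <= v x.
Proof.
  intros Hs Hv_before.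
  destruct solution as [Cw [Cv [_ [Vpos _]]]].
  assert (HUs : InU h Rm (seg w s) (seg v s)).
  { split; [apply C1_on_seg; auto |]. split; [apply C1_on_seg; auto |].
    intros th Jth. apply Vpos. unfold J, Jinf in *; lra. }
  destruct (j_seg_locally_lower_bounded s Hs HUs) as [C [eta1 [HC [Heta1 Hj]]]].
  set (d := Rmin eta1 (- Rm) / 2).
  assert (Hd : 0 < d /\ d < eta1 /\ d < - Rm)
    by (unfold d; apply Rmin_case_strong; intros; lra).
  destruct (C1_on_cont_on _ _ Cv s ltac:(unfold Jinf; lra) d ltac:(lra))
    as [eta2 [Heta2 Hv_near]].
  set (eta := Rmin (Rmin eta1 (eta2 / 2)) (/ C / 2)).
  assert (Heta : 0 < eta /\ eta <= eta1 /\ eta < eta2 /\ eta < / C).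
  { pose proof (Rinv_0_lt_compat C HC).
    unfold eta. repeat split; repeat apply Rmin_case_strong; intros; lra. }
  exists eta. split; [lra |]. intros x Hx. apply Rnot_lt_le; intro Hvx.
  destruct (continuity_ab_min v s x) as [tau [Hmin Htau]];
    [lra | intros; apply v_continuous; lra |].
  set (a := - v tau).
  assert (Hvtau : v tau = - a) by (unfold a; ring).
  assert (Ha : 0 < a) by (pose proof (Hmin x ltac:(lra)); lra).
  assert (Had : a <= d).
  { pose proof (Hv_near tau ltac:(unfold Jinf; lra) ltac:(rewrite Rabs_right; lra)).
    pose proof (Hv_before s ltac:(lra)).
    unfold Rabs in *; destruct Rcase_abs in *; lra. }
  assert (Hseg : forall r th, s <= r <= tau -> J h th -> - a <= v (r + th)).
  { intros r th Hr Jth. unfold J in Jth. destruct (Rle_dec (r + th) s).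
    - pose proof (Hv_before (r + th) ltac:(lra)). lra.
    - rewrite <- Hvtau. apply Hmin. lra. }
  assert (Hstau : s < tau).
  { destruct (Req_dec tau s) as [E | E]; [| lra].
    pose proof (Hv_before s ltac:(lra)). rewrite E in Hvtau. lra. }
  destruct (last_crossing v s tau 0) as [p [Hp [Hvp Hbelow]]]; try lra.
  { intros; apply v_continuous; lra. }
  { apply Hv_before; lra. }
  assert (Hfall : - C * a * (tau - p) <= v tau - v p).
  { apply MVT_lower_bound with (fun r => j (seg w r) (seg v r) - mu * v r); try lra.
    - intros; apply v_derivable; lra.
    - intros; apply v_continuous; lra.
    - intros r Hr. pose proof (Hj r a ltac:(lra) ltac:(lra) ltac:(lra)
                                 (fun th Jth => Hseg r th ltac:(lra) Jth)).
      pose proof (Hbelow r ltac:(lra)). nra. }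
  assert (Hshort : C * (tau - p) < 1).
  { replace 1 with (C * / C) by (field; lra). apply Rmult_lt_compat_l; lra. }
  rewrite Hvtau, Hvp in Hfall. nra.
Qed.

Lemma v_nonneg t : Jinf h t -> 0 <= v t.
Proof.
  intro Jt. destruct (Rle_dec t 0) as [Ht | Ht].
  { apply w_v_nonneg_initial. unfold J, Jinf in *; lra. }
  apply Rnot_lt_le; intro Hvt.
  destruct (first_exit v 0 t) as [s [Hs [Hv_s Hexit]]]; try lra.
  { intros; apply v_continuous; lra. }
  { apply w_v_nonneg_initial; unfold J; lra. }
  destruct (v_nonneg_near s) as [eta [Heta Hnear]]; [lra | |].
  { intros y Hy. destruct (Rle_dec y 0).
    - apply w_v_nonneg_initial; unfold J; lra.
    - apply Hv_s; lra. }
  destruct (Hexit eta Heta) as [x [Hx [_ Hvx]]].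
  pose proof (Hnear x ltac:(lra)). lra.
Qed.

Lemma seg_InUp r : 0 <= r -> InUp h (seg w r) (seg v r).
Proof.
  destruct solution as [Cw [Cv _]]. intro Hr.
  split; [apply C1_on_seg; auto |]. split; [apply C1_on_seg; auto |].
  intros th Jth. unfold seg, J in *.
  split; [apply w_nonneg | apply v_nonneg]; unfold Jinf; lra.
Qed.

Variables (del zs L : R).
Hypothesis M_nonneg : 0 <= M.
Hypothesis del_pos : 0 < del.
Hypothesis zs_nonneg : 0 <= zs.
Hypothesis L_pos : 0 < L.
Hypothesis q_dissipative : forall z, zs <= z -> q z <= - del.
Hypothesis j_large : forall phi psi, InUp h phi psi ->
  (forall t, J h t -> L <= phi t) -> mu * zs + 1 <= j phi psi.

Lemma v_large_while_w_large p T : 0 <= p -> (forall x, p <= x <= T -> L <= w x) ->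
  forall y, p + h + zs <= y <= T -> zs <= v y.
Proof.
  intros Hp HwL y Hy.
  apply rise_to_level with (fun c => j (seg w c) (seg v c) - mu * v c) (p + h); try lra.
  - intros; apply v_continuous; lra.
  - intros; apply v_derivable; lra.
  - intros c Hc Hvc.
    assert (mu * zs + 1 <= j (seg w c) (seg v c)).
    { apply j_large; [apply seg_InUp; lra |].
      intros th Jth. unfold seg, J in *. apply HwL. lra. }
    pose proof (Rmult_le_compat_l mu _ _ mu_nonneg Hvc). lra.
  - pose proof (v_nonneg (p + h) ltac:(unfold Jinf; lra)). lra.
Qed.

Lemma w_decay_while_large p T : 0 <= p -> (forall x, p <= x <= T -> L <= w x) ->
  forall y, p + h + zs <= y <= T -> w y <= w (p + h + zs) - del * L * (y - (p + h + zs)).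
Proof.
  intros Hp HwL y Hy.
  assert (w y - w (p + h + zs) <= - del * L * (y - (p + h + zs))); [| lra].
  apply MVT_upper_bound with (fun c => q (v c) * w c); try lra.
  - intros; apply w_derivable; lra.
  - intros; apply w_continuous; lra.
  - intros c Hc. pose proof (q_dissipative _ (v_large_while_w_large p T Hp HwL c ltac:(lra))).
    pose proof (HwL c ltac:(lra)). nra.
Qed.

Lemma w_eventually_le_L : exists t0, 0 <= t0 /\ w t0 <= L.
Proof.
  apply NNPP; intro Hno.
  assert (Hgt : forall t, 0 <= t -> L < w t).
  { intros t Ht. apply Rnot_le_lt; intro. apply Hno; exists t; split; auto. }
  set (T0 := h + zs).
  set (T := T0 + w T0 / (del * L) + 1).
  assert (HwT0 : 0 <= w T0) by (apply w_nonneg; unfold Jinf, T0; lra).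
  assert (HdL : 0 < del * L) by nra.
  assert (0 <= w T0 / (del * L))
    by (apply Rmult_le_pos; [lra | left; apply Rinv_0_lt_compat; lra]).
  assert (Hdecay := w_decay_while_large 0 T ltac:(lra)
                      ltac:(intros x Hx; left; apply Hgt; lra) T).
  replace (0 + h + zs) with T0 in Hdecay by (unfold T0; ring).
  specialize (Hdecay ltac:(unfold T; lra)).
  replace (del * L * (T - T0)) with (w T0 + del * L) in Hdecay
    by (unfold T; field; lra).
  assert (HT0 : 0 <= T0) by (unfold T0; lra).
  pose proof (Hgt T ltac:(unfold T; lra)). lra.
Qed.

Lemma w_le_after t0 : 0 <= t0 -> w t0 <= L ->
  forall t, t0 <= t -> w t <= L * exp (M * (h + zs)).
Proof.
  intros Ht0 Hwt0 t Ht.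
  assert (HK : L <= L * exp (M * (h + zs))).
  { pose proof (exp_ineq1_le (M * (h + zs))). pose proof (Rmult_le_pos M (h + zs)). nra. }
  apply Rnot_lt_le; intro Hgt.
  destruct (last_crossing (fun x => - w x) t0 t (- L)) as [p [Hp [Hwp Habove]]];
    simpl; try lra.
  { destruct (Req_dec t0 t) as [-> |]; lra. }
  { intros x Hx. apply continuity_pt_opp, w_continuous. lra. }
  assert (HwL : forall x, p <= x <= t -> L <= w x).
  { intros x Hx. destruct (Req_dec x p) as [-> | E]; [lra |].
    pose proof (Habove x ltac:(lra)). lra. }
  assert (Hgrow : forall y, p <= y <= p + h + zs -> w y <= L * exp (M * (h + zs))).
  { intros y Hy. eapply Rle_trans; [apply (w_growth p y); lra |].
    replace (w p) with L by lra. apply Rmult_le_compat_l; [lra |].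
    assert (Hexp : M * (y - p) <= M * (h + zs)) by (apply Rmult_le_compat_l; lra).
    destruct (Rle_lt_or_eq_dec _ _ Hexp) as [Hlt | ->]; [| lra].
    left. apply exp_increasing, Hlt. }
  destruct (Rle_dec t (p + h + zs)) as [Hle | Hlt].
  - pose proof (Hgrow t ltac:(lra)). lra.
  - pose proof (Hgrow (p + h + zs) ltac:(lra)).
    pose proof (w_decay_while_large p t ltac:(lra) HwL t ltac:(lra)).
    pose proof (Rmult_le_pos (del * L) (t - (p + h + zs)) ltac:(nra) ltac:(lra)). lra.
Qed.

End Solution.

Theorem lemma16 (h Rm mu : R) (q : R -> R) (j : (R -> R) -> (R -> R) -> R) :
  0 < h -> Rm < 0 -> 0 <= mu ->
  j_well_defined h Rm j ->
  H1 h Rm j -> H2 Rm q -> H3 h Rm mu q j -> H8 q -> H9 h j ->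
  exists K2, forall phi psi, InXp h Rm mu q j phi psi ->
    forall w v, is_solution h Rm mu q j phi psi w v ->
      exists tm, forall t, tm <= t -> w t <= K2.
Proof.
  intros Hh HRm Hmu _ [HS [_ [Hj0 _]]] [[M HM] _] _ [del [zs [Hdel [Hzs Hq]]]] HL0.
  assert (HqM : forall z, I Rm z -> q z <= M)
    by (intros z Hz; pose proof (HM z Hz); pose proof (Rle_abs (q z)); lra).
  assert (HM0 : 0 <= M) by (pose proof (HM 0 HRm); pose proof (Rabs_pos (q 0)); lra).
  destruct (HL0 (mu * zs + 1)) as [L0 HL0'];
    [pose proof (Rmult_le_pos mu zs Hmu Hzs); lra |].
  set (L := Rmax L0 1).
  assert (HL : 0 < L) by (pose proof (Rmax_r L0 1); unfold L; lra).
  assert (HL0L : L0 <= L) by apply Rmax_l.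
  assert (Hjl : forall phi psi, InUp h phi psi ->
                  (forall t, J h t -> L <= phi t) -> mu * zs + 1 <= j phi psi).
  { intros phi psi Hp Hge. apply HL0'; auto.
    intros t Jt. pose proof (Hge t Jt). lra. }
  exists (L * exp (M * (h + zs))).
  intros phi psi [_ [_ [_ Hnn]]] w v Hsol.
  assert (Hphi : forall t, J h t -> 0 <= phi t) by (intros t Jt; apply Hnn, Jt).
  assert (Hpsi : forall t, J h t -> 0 <= psi t) by (intros t Jt; apply Hnn, Jt).
  destruct (w_eventually_le_L h Rm mu q j phi psi w v Hh HRm Hmu HS Hj0 Hphi Hpsi Hsol
              M HqM del zs L Hdel Hzs HL Hq Hjl) as [t0 [Ht0 Hwt0]].
  exists t0.
  exact (w_le_after h Rm mu q j phi psi w v Hh HRm Hmu HS Hj0 Hphi Hpsi Hsol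
           M HqM del zs L HM0 Hdel Hzs HL Hq Hjl t0 Ht0 Hwt0).
Qed.
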